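(* Let $M=A+\Delta-\sigma vv^{\mathsf T}$ be a generalized modularity matrix, and let $x\neq 0$ satisfy $Mx=m_Gx$, with $x$ oriented so that $v^{\mathsf T}x\ge 0$. Then the set $S=\{i\in V: x_i\ge 0\}$ induces a connected subgraph $G(S)$ of $G$.
   Context: Let $V=\{1,\dots,n\}$ and let $A\in\mathbb{R}^{n\times n}$ be the adjacency matrix of an undirected connected weighted graph $G$ on $V$, possibly with loops, i.e. $A=(a_{ij})$ is symmetric, entrywise nonnegative and irreducible. A generalized modularity matrix is any matrix $M=A+\Delta-\sigma vv^{\mathsf T}$ where $\Delta$ is a real diagonal $n\times n$ matrix, $v\in\mathbb{R}^n$ is a nonzero entrywise nonnegative vector, and $\sigma>0$. Eigenvalues of a real symmetric matrix $X$ are ordered $\lambda_1(X)\ge\cdots\ge\lambda_n(X)$; $m_G:=\lambda_1(M)$. For $S\subseteq V$, $G(S)$ denotes the subgraph induced by $S$, whose adjacency matrix is the principal submatrix $A(S)$ of $A$ with indices in $S$; it is connected if the graph on vertex set $S$ in which distinct $i,j$ are adjacent iff $a_{ij}>0$ is connected. *)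

From HB Require Import structures.
From mathcomp Require Import all_boot all_order all_algebra.
Set Implicit Arguments. Unset Strict Implicit. Unset Printing Implicit Defensive.
Import Order.TTheory GRing.Theory Num.Theory.
Local Open Scope ring_scope.

Section Defs.
Variables (R : rcfType) (n : nat).

Definition sym_mx (A : 'M[R]_n) : Prop := A^T = A.

Definition nonneg_mx (A : 'M[R]_n) : Prop := forall i j, 0 <= A i j.
Definition nonneg_cv (v : 'cV[R]_n) : Prop := forall i, 0 <= v i 0.

(* irreducible matrix: there is no nonempty proper index set S with
   A i j = 0 for all i in S, j not in S (i.e. A is not permutation-similar
   to a block triangular matrix). *)
Definition irreducible_mx (A : 'M[R]_n) : Prop :=
  forall S : {set 'I_n}, S != set0 -> S != setT ->
    exists i j, [/\ i \in S, j \notin S & A i j != 0].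

Definition gen_modularity (A : 'M[R]_n) (d : 'rV[R]_n) (sigma : R)
  (v : 'cV[R]_n) : 'M[R]_n :=
  A + diag_mx d - sigma *: (v *m v^T).

Definition is_lambda1 (M : 'M[R]_n) (m : R) : Prop :=
  eigenvalue M m /\ forall mu, eigenvalue M mu -> mu <= m.

Definition adjA (A : 'M[R]_n) : rel 'I_n := fun i j => (i != j) && (0 < A i j).

Definition induced_connected (A : 'M[R]_n) (S : {set 'I_n}) : Prop :=
  forall i j, i \in S -> j \in S ->
    connect (fun x y => [&& adjA A x y, x \in S & y \in S]) i j.

End Defs.

(* Since m = lambda_1(M), the matrix m I - M is positive semidefinite.  If the
   nonnegative support S of x split into parts P and Q with no edges between
   them, write xP, xQ, xN for the restrictions of x to P, Q and V \ S, and pick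
   beta > 0, gam >= 0 with beta v'xP = gam v'xQ.  Because (m I - M) x = 0 and
   the off-diagonal entries of A are nonnegative, the form of
   m I - M at z = beta xP - gam xQ is nonpositive, hence zero, so z and then
   beta x - z lie in the kernel of m I - M.  The latter vanishes on P, and its
   eigen-equation on a row of P forces every edge leaving P to end in S, i.e.
   in Q, where there are none: P is a closed set, contradicting irreducibility. *)

From HB Require Import structures.
From mathcomp Require Import all_boot all_order all_algebra.
From mathcomp Require Import complex ring lra.
Import Order.TTheory GRing.Theory Num.Theory.
Set Implicit Arguments. Unset Strict Implicit. Unset Printing Implicit Defensive.
Local Open Scope ring_scope.

Section QuadraticForm.
Variables (R : realFieldType) (n : nat).
Implicit Types (N : 'M[R]_n) (u w z : 'cV[R]_n).

Definition mxform N u w : R := (u^T *m N *m w) 0 0.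

Lemma mxformE N u w : mxform N u w = \sum_i \sum_j u i 0 * N i j * w j 0.
Proof.
rewrite /mxform -mulmxA mxE; apply: eq_bigr => i _.
by rewrite !mxE mulr_sumr; apply: eq_bigr => j _; rewrite mulrA.
Qed.

Lemma mxform1 u w : mxform 1%:M u w = (u^T *m w) 0 0.
Proof. by rewrite /mxform mulmx1. Qed.

Lemma mxformDl N u1 u2 w : mxform N (u1 + u2) w = mxform N u1 w + mxform N u2 w.
Proof. by rewrite /mxform linearD /= !mulmxDl mxE. Qed.

Lemma mxformDr N u w1 w2 : mxform N u (w1 + w2) = mxform N u w1 + mxform N u w2.
Proof. by rewrite /mxform !mulmxDr mxE. Qed.

Lemma mxformZl N c u w : mxform N (c *: u) w = c * mxform N u w.
Proof. by rewrite /mxform linearZ /= -!scalemxAl mxE. Qed.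

Lemma mxformZr N c u w : mxform N u (c *: w) = c * mxform N u w.
Proof. by rewrite /mxform -!scalemxAr mxE. Qed.

Lemma mxformBl N u1 u2 w : mxform N (u1 - u2) w = mxform N u1 w - mxform N u2 w.
Proof. by rewrite mxformDl -scaleN1r mxformZl mulN1r. Qed.

Lemma mxformBr N u w1 w2 : mxform N u (w1 - w2) = mxform N u w1 - mxform N u w2.
Proof. by rewrite mxformDr -scaleN1r mxformZr mulN1r. Qed.

Lemma mxformDm N1 N2 u w : mxform (N1 + N2) u w = mxform N1 u w + mxform N2 u w.
Proof. by rewrite /mxform mulmxDr mulmxDl mxE. Qed.

Lemma mxformZm c N u w : mxform (c *: N) u w = c * mxform N u w.
Proof. by rewrite /mxform -scalemxAr -scalemxAl mxE. Qed.

Lemma mxformBm N1 N2 u w : mxform (N1 - N2) u w = mxform N1 u w - mxform N2 u w.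
Proof. by rewrite mxformDm -scaleN1r mxformZm mulN1r. Qed.

Lemma mxformC N u w : N^T = N -> mxform N u w = mxform N w u.
Proof.
move=> symN; rewrite /mxform.
have -> : (u^T *m N *m w) 0 0 = (u^T *m N *m w)^T 0 0 by rewrite [RHS]mxE.
by rewrite !trmx_mul trmxK symN mulmxA.
Qed.

Lemma mxform_kerr N u w : N *m w = 0 -> mxform N u w = 0.
Proof. by move=> Nw; rewrite /mxform -mulmxA Nw mulmx0 mxE. Qed.

Lemma mxform_diag_disjoint (e : 'rV[R]_n) u w :
  (forall i, u i 0 * w i 0 = 0) -> mxform (diag_mx e) u w = 0.
Proof.
move=> uw0; rewrite mxformE big1 // => i _; rewrite (bigD1 i) //= big1.
  by rewrite !mxE eqxx mulr1n mulrAC uw0 mul0r addr0.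
by move=> j /negbTE ji; rewrite !mxE eq_sym ji mulr0 mul0r.
Qed.

Lemma mxform_dyad (v u w : 'cV[R]_n) :
  mxform (v *m v^T) u w = (v^T *m u) 0 0 * (v^T *m w) 0 0.
Proof.
rewrite /mxform !mulmxA -mulmxA mxE big_ord1.
have -> : u^T *m v = (v^T *m u)^T by rewrite trmx_mul trmxK.
by rewrite mxE.
Qed.

Definition psd_mx N : Prop := forall z, 0 <= mxform N z z.

Lemma cvdot_self_eq0 w : (w^T *m w) 0 0 = 0 -> w = 0.
Proof.
rewrite mxE => /eqP; rewrite psumr_eq0 => [/allP w0|i _]; last first.
  by rewrite mxE -expr2 sqr_ge0.
apply/colP => i; have := w0 i (mem_index_enum i).
by rewrite !mxE -expr2 sqrf_eq0 => /eqP.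
Qed.

(* With [w = N z] and [s = |w|^2 > 0], the form at [z - t w] with
   [t = s / (q(w) + 1)] would be negative. *)
Lemma psd_mx_kernel N z :
  N^T = N -> psd_mx N -> mxform N z z = 0 -> N *m z = 0.
Proof.
move=> symN psdN qz0; set w := N *m z; apply: cvdot_self_eq0.
set s := (w^T *m w) 0 0.
have s_ge0 : 0 <= s by rewrite /s mxE sumr_ge0 // => i _; rewrite mxE -expr2 sqr_ge0.
have qzw : mxform N z w = s.
  by rewrite /mxform (_ : z^T *m N = w^T) // /w trmx_mul symN.
have qwz : mxform N w z = s by rewrite /mxform -mulmxA.
apply/eqP; rewrite eq_le s_ge0 andbT leNgt; apply/negP => s_gt0.
set K := mxform N w w; have K1_gt0 : 0 < K + 1 by rewrite ltr_wpDl ?psdN.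
have := psdN (z - (s / (K + 1)) *: w).
rewrite mxformBl !mxformBr !mxformZl !mxformZr qz0 qzw qwz -/K.
have -> : 0 - s / (K + 1) * s - (s / (K + 1) * s - s / (K + 1) * (s / (K + 1) * K))
  = - (s * s / (K + 1) / (K + 1)) * (K + 2) by field; rewrite gt_eqF.
by rewrite pmulr_lge0 ?ltr_wpDl ?psdN // oppr_ge0 lt_geF // !divr_gt0 // mulr_gt0.
Qed.

(* [N (p + q + r) = 0] eliminates the diagonal values [q(p,p)], [q(q,q)]; the
   remaining terms bound the form by [- s beta a (beta + gam) (a + b + c)]. *)
Lemma mxform_balanced_le0 N (p q r : 'cV[R]_n) (s a b c beta gam : R) :
  N^T = N -> N *m (p + q + r) = 0 ->
  mxform N p q = s * a * b -> s * a * c <= mxform N p r ->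
  s * b * c <= mxform N q r ->
  0 <= s -> 0 <= a -> 0 <= a + b + c -> 0 <= beta -> 0 <= gam ->
  beta * a = gam * b ->
  mxform N (beta *: p - gam *: q) (beta *: p - gam *: q) <= 0.
Proof.
move=> symN Nsum qpq qpr qqr s0 a0 abc0 beta0 gam0 bal.
have qpp : mxform N p p = - mxform N p q - mxform N p r.
  have := mxform_kerr p Nsum; rewrite !mxformDr; lra.
have qqq : mxform N q q = - mxform N p q - mxform N q r.
  have := mxform_kerr q Nsum; rewrite !mxformDr (mxformC p) //; lra.
rewrite mxformBl !mxformBr !mxformZl !mxformZr (mxformC q p) // qpp qqq qpq.
have key : beta ^+ 2 * (a * c) + gam ^+ 2 * (b * c) + (beta + gam) ^+ 2 * (a * b)
    = beta * a * (beta + gam) * (a + b + c).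
  transitivity (beta * a * (beta + gam) * (a + b + c)
    + (gam * b - beta * a) * (gam * c + (beta + gam) * a)); first by ring.
  by rewrite -bal subrr mul0r addr0.
have h1 : beta ^+ 2 * (s * a * c) <= beta ^+ 2 * mxform N p r.
  by rewrite ler_wpM2l ?sqr_ge0.
have h2 : gam ^+ 2 * (s * b * c) <= gam ^+ 2 * mxform N q r.
  by rewrite ler_wpM2l ?sqr_ge0.
have h3 : 0 <= s * (beta * a * (beta + gam) * (a + b + c)).
  by rewrite !mulr_ge0 // addr_ge0.
have e : s * (beta * a * (beta + gam) * (a + b + c)) = beta ^+ 2 * (s * a * c)
    + gam ^+ 2 * (s * b * c) + (beta + gam) ^+ 2 * (s * a * b).
  by rewrite -key; ring.
lra.
Qed.

End QuadraticForm.

Section Spectral.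
Local Open Scope sesquilinear_scope.
Variables (C : numClosedFieldType) (n : nat) (H : 'M[C]_n).
Hypothesis normalH : H \is normalmx.

Let P := spectralmx H.
Let D := spectral_diag H.
Let PtP : P^t* *m P = 1%:M.
Proof. by rewrite -invmx_unitary ?spectral_unitarymx // mulVmx // spectral_unit. Qed.
Let PPt : P *m P^t* = 1%:M.
Proof. exact/unitarymxP/spectral_unitarymx. Qed.
Let H_spectral : H = P^t* *m diag_mx D *m P.
Proof. by rewrite -invmx_unitary ?spectral_unitarymx //; apply/orthomx_spectralP. Qed.

Lemma spectral_diag_eigenvalue k : eigenvalue H (D 0 k).
Proof.
apply/eigenvalueP; exists (row k P).
  rewrite H_spectral !mulmxA -!row_mul PPt mul1mx row_mul row_diag_mx.
  by rewrite -scalemxAl; congr (_ *: _); rewrite -rowE.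
apply/eqP => /(congr1 (fun X => X *m P^t*)); rewrite mul0mx -row_mul PPt.
by move=> /rowP /(_ k); rewrite !mxE eqxx /= => /eqP; rewrite oner_eq0.
Qed.

(* In the eigenbasis [y = P z] the form is [\sum_k (c - D_k) |y_k|^2]. *)
Lemma normalmx_form_ge0 (c : C) : (forall k, D 0 k <= c) ->
  forall z : 'cV_n, 0 <= (z^t* *m (c%:M - H) *m z) 0 0.
Proof.
move=> Dle z.
have -> : c%:M = P^t* *m diag_mx (const_mx c) *m P.
  by rewrite diag_const_mx mul_mx_scalar -scalemxAl PtP scalemx1.
rewrite H_spectral -mulmxBl -mulmxBr -linearB /= !mulmxA.
have -> : z^t* *m P^t* = (P *m z)^t* by rewrite trmx_mul map_mxM.
rewrite -mulmxA mul_mx_diag mxE.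
apply: sumr_ge0 => i _; rewrite !mxE mulrAC mulrC.
by apply: mulr_ge0; [rewrite subr_ge0 Dle | rewrite mulrC mul_conjC_ge0].
Qed.

End Spectral.

Section RealSymmetric.
Local Open Scope sesquilinear_scope.
Variables (R : rcfType) (n : nat).

Lemma eigenvalue_complexify (M : 'M[R]_n) (a : R) :
  eigenvalue (map_mx (real_complex R) M) (real_complex R a) = eigenvalue M a.
Proof. by rewrite !eigenvalue_root_char -map_char_poly fmorph_root. Qed.

Lemma sym_lambda1_psd (M : 'M[R]_n) (m : R) :
  M^T = M -> (forall mu, eigenvalue M mu -> mu <= m) -> psd_mx (m%:M - M).
Proof.
move=> sM Mle z; pose f := real_complex R; pose Mc := map_mx f M.
have herm_Mc : Mc \is hermsymmx.
  apply/is_hermitianmxP; rewrite expr0 scale1r.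
  by apply/matrixP => i j; rewrite !mxE -[in LHS]sM mxE conj_Creal // complex_real.
have Dle k : spectral_diag Mc 0 k <= f m.
  have /mxOverP/(_ 0 k) Dreal := hermitian_spectral_diag_real herm_Mc.
  have := spectral_diag_eigenvalue (hermitian_normalmx herm_Mc) k.
  by rewrite -(RRe_real Dreal) eigenvalue_complexify => /Mle; rewrite lecR.
have := normalmx_form_ge0 (hermitian_normalmx herm_Mc) Dle (map_mx f z).
have -> : (map_mx f z)^t* = map_mx f z^T.
  by apply/matrixP => i j; rewrite !mxE conj_Creal // complex_real.
by rewrite -map_scalar_mx -map_mxB -!map_mxM mxE ler0c.
Qed.

End RealSymmetric.

Lemma sub_scalar_mx_ker (R : comNzRingType) n (M : 'M[R]_n) m (w : 'cV[R]_n) :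
  ((m%:M - M) *m w == 0) = (M *m w == m *: w).
Proof. by rewrite mulmxBl mul_scalar_mx subr_eq0 eq_sym. Qed.

Section Restriction.
Variables (R : realFieldType) (n : nat).
Implicit Types (N : 'M[R]_n) (x y u w : 'cV[R]_n) (T : {set 'I_n}).

Definition restrict_cv x T : 'cV[R]_n := \col_i (if i \in T then x i 0 else 0).

Lemma restrict_cv_disjoint x y T1 T2 : [disjoint T1 & T2] ->
  forall i, restrict_cv x T1 i 0 * restrict_cv y T2 i 0 = 0.
Proof.
move=> dis i; rewrite !mxE; case: ifP => iT1; last by rewrite mul0r.
by rewrite (disjointFr dis iT1) mulr0.
Qed.

Lemma restrict_cv_partition x T1 T2 : [disjoint T1 & T2] ->
  x = restrict_cv x T1 + restrict_cv x T2 + restrict_cv x (~: (T1 :|: T2)).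
Proof.
move=> /pred0P dis; apply/colP => i; rewrite !mxE !inE.
have /= := dis i; case: (i \in T1) => /= [-> | _]; first by rewrite !addr0.
by case: (i \in T2); rewrite ?addr0 add0r.
Qed.

Lemma mxform_restrict_noedge N x y T1 T2 :
  (forall i j, i \in T1 -> j \in T2 -> N i j = 0) ->
  mxform N (restrict_cv x T1) (restrict_cv y T2) = 0.
Proof.
move=> N0; rewrite mxformE big1 // => i _; rewrite big1 // => j _; rewrite !mxE.
case: ifP => iT1; last by rewrite !mul0r.
by case: ifP => jT2; rewrite ?mulr0 // N0 // mulr0 mul0r.
Qed.

Lemma mxform_nonneg_le0 N u w : (forall i j, 0 <= N i j) ->
  (forall i, 0 <= u i 0) -> (forall j, w j 0 <= 0) -> mxform N u w <= 0.
Proof.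
move=> N_ge0 u_ge0 w_le0; rewrite mxformE sumr_le0 // => i _.
by rewrite sumr_le0 // => j _; rewrite mulr_ge0_le0 ?mulr_ge0.
Qed.

End Restriction.

Section GenModularity.
Variables (R : rcfType) (n : nat) (A : 'M[R]_n) (d : 'rV[R]_n) (sigma : R).
Variable v : 'cV[R]_n.
Local Notation M := (gen_modularity A d sigma v).

Lemma gen_modularity_sym : A^T = A -> M^T = M.
Proof.
move=> symA; rewrite /gen_modularity linearB linearD /= symA tr_diag_mx.
by rewrite linearZ /= trmx_mul trmxK.
Qed.

Lemma gen_modularity_row (z : 'cV[R]_n) i : (M *m z) i 0 =
  \sum_j A i j * z j 0 + d 0 i * z i 0 - sigma * v i 0 * (v^T *m z) 0 0.
Proof.
rewrite mulmxBl mulmxDl -scalemxAl -mulmxA mul_diag_mx !mxE big_ord1 !mxE.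
by rewrite -mulrA.
Qed.

Lemma gen_modularity_row_at_zero m (z : 'cV[R]_n) i :
  M *m z = m *: z -> z i 0 = 0 ->
  \sum_j A i j * z j 0 = sigma * v i 0 * (v^T *m z) 0 0.
Proof.
move=> /(congr1 (fun y : 'cV_n => y i 0)) /= + zi0.
rewrite gen_modularity_row [(m *: z) i 0]mxE zi0 !mulr0 addr0.
by move=> /eqP; rewrite subr_eq0 => /eqP.
Qed.

Lemma mxform_gen_modularity_disjoint m (u w : 'cV[R]_n) :
  (forall i, u i 0 * w i 0 = 0) ->
  mxform (m%:M - M) u w = sigma * (v^T *m u) 0 0 * (v^T *m w) 0 0 - mxform A u w.
Proof.
move=> uw0; rewrite -diag_const_mx /gen_modularity !mxformBm mxformDm mxformZm.
by rewrite mxform_dyad !mxform_diag_disjoint //; ring.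
Qed.

End GenModularity.

Section NonnegSplit.
Variables (R : rcfType) (n : nat) (A : 'M[R]_n) (d : 'rV[R]_n) (sigma : R).
Variables (v : 'cV[R]_n) (m : R) (x : 'cV[R]_n).
Local Notation M := (gen_modularity A d sigma v).
Local Notation N := (m%:M - M).
Local Notation S := [set i | 0 <= x i 0].
Hypotheses (symA : A^T = A) (nnA : nonneg_mx A) (nnv : nonneg_cv v).
Hypotheses (sigma_gt0 : 0 < sigma) (psdN : psd_mx N).
Hypotheses (Mx : M *m x = m *: x) (vx_ge0 : 0 <= (v^T *m x) 0 0).

Let symN : N^T = N.
Proof. by rewrite linearB /= tr_scalar_mx gen_modularity_sym. Qed.

Let Nx : N *m x = 0.
Proof. by apply/eqP; rewrite sub_scalar_mx_ker Mx. Qed.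

Let vdot_ge0 (u : 'cV[R]_n) : (forall i, 0 <= u i 0) -> 0 <= (v^T *m u) 0 0.
Proof. by move=> u_ge0; rewrite mxE sumr_ge0 // => i _; rewrite mxE mulr_ge0. Qed.

Let restrict_nonneg_ge0 (T : {set 'I_n}) :
  T \subset S -> forall i, 0 <= restrict_cv x T i 0.
Proof.
by move=> /subsetP TS i; rewrite mxE; case: ifP => // /TS; rewrite inE.
Qed.

Section Balanced.
Variables (P Q : {set 'I_n}).
Hypotheses (disPQ : [disjoint P & Q]) (PQ_S : P :|: Q = S).
Hypothesis noedgePQ : forall i j, i \in P -> j \in Q -> A i j = 0.
Local Notation xP := (restrict_cv x P).
Local Notation xQ := (restrict_cv x Q).
Local Notation xN := (restrict_cv x (~: (P :|: Q))).

Let xN_le0 i : xN i 0 <= 0.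
Proof. by rewrite mxE PQ_S !inE -ltNge; case: ifP => // /ltW. Qed.

Let mxformN_disjoint (T1 T2 : {set 'I_n}) : [disjoint T1 & T2] ->
  mxform N (restrict_cv x T1) (restrict_cv x T2) = sigma *
    (v^T *m restrict_cv x T1) 0 0 * (v^T *m restrict_cv x T2) 0 0
    - mxform A (restrict_cv x T1) (restrict_cv x T2).
Proof.
by move=> dis; rewrite mxform_gen_modularity_disjoint //; apply: restrict_cv_disjoint.
Qed.

Let mxformN_nonneg_neg (T : {set 'I_n}) :
  T \subset S -> [disjoint T & ~: (P :|: Q)] ->
  sigma * (v^T *m restrict_cv x T) 0 0 * (v^T *m xN) 0 0
    <= mxform N (restrict_cv x T) xN.
Proof.
move=> TS dis; rewrite mxformN_disjoint // lerDl oppr_ge0.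
exact: mxform_nonneg_le0 (restrict_nonneg_ge0 TS) xN_le0.
Qed.

Lemma balanced_split_ker (beta gam : R) : 0 <= beta -> 0 <= gam ->
  beta * (v^T *m xP) 0 0 = gam * (v^T *m xQ) 0 0 ->
  N *m (beta *: xP - gam *: xQ) = 0.
Proof.
move=> beta_ge0 gam_ge0 bal.
have PS : P \subset S by rewrite -PQ_S subsetUl.
have QS : Q \subset S by rewrite -PQ_S subsetUr.
have dis_N (T : {set 'I_n}) : T \subset P :|: Q -> [disjoint T & ~: (P :|: Q)].
  by rewrite -subsets_disjoint.
have vx : (v^T *m x) 0 0 = (v^T *m xP) 0 0 + (v^T *m xQ) 0 0 + (v^T *m xN) 0 0.
  by rewrite {1}(restrict_cv_partition x disPQ) !mulmxDr !mxE.
apply: psd_mx_kernel symN psdN _; apply/eqP; rewrite eq_le psdN andbT.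
apply: (mxform_balanced_le0 (r := xN) (s := sigma) (a := (v^T *m xP) 0 0)
  (b := (v^T *m xQ) 0 0) (c := (v^T *m xN) 0 0)) => //.
- by rewrite -restrict_cv_partition.
- by rewrite mxformN_disjoint // mxform_restrict_noedge // subr0.
- by apply: mxformN_nonneg_neg; rewrite ?dis_N ?subsetUl.
- by apply: mxformN_nonneg_neg; rewrite ?dis_N ?subsetUr.
- exact: ltW.
- exact/vdot_ge0/restrict_nonneg_ge0.
- by rewrite -vx.
Qed.

(* [w = beta x - z] is an eigenvector vanishing on [P]; on a row [i] of [P] the
   eigen-equation reads [\sum_j A_ij w_j = sigma v_i v'w >= 0], while every
   term is [<= 0] and is nonzero when [A_ij > 0] and [j] lies outside [S]. *)
Lemma balanced_split_closed (beta gam : R) : 0 < beta -> 0 <= gam ->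
  beta * (v^T *m xP) 0 0 = gam * (v^T *m xQ) 0 0 ->
  forall i j, i \in P -> j \notin P :|: Q -> A i j = 0.
Proof.
move=> beta_gt0 gam_ge0 bal i j iP jPQ.
set w := beta *: x - (beta *: xP - gam *: xQ).
have Mw : M *m w = m *: w.
  apply/eqP; rewrite -sub_scalar_mx_ker mulmxBr -scalemxAr Nx.
  by rewrite balanced_split_ker ?scaler0 ?subr0 // ltW.
have vw : (v^T *m w) 0 0 = beta * (v^T *m x) 0 0.
  by rewrite -!mxform1 !mxformBr !mxformZr !mxform1 bal subrr subr0.
have wE k : w k 0 =
    if k \in P then 0 else if k \in Q then (beta + gam) * x k 0 else beta * x k 0.
  rewrite !mxE; have /pred0P/(_ k) /= := disPQ.
  by case: (k \in P) => /= [-> | _]; [|case: (k \in Q)]; ring.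
have wi0 : w i 0 = 0 by rewrite wE iP.
have term_le0 k : A i k * w k 0 <= 0.
  rewrite wE; case: ifP => kP; first by rewrite mulr0.
  case: ifP => kQ; first by rewrite noedgePQ ?mul0r.
  have : k \notin S by rewrite -PQ_S inE kP kQ.
  by rewrite inE -ltNge => xk_lt0; rewrite mulr_ge0_le0 // pmulr_rle0 // ltW.
have sum_ge0 : 0 <= \sum_k A i k * w k 0.
  by rewrite (gen_modularity_row_at_zero Mw wi0) vw !mulr_ge0 // ltW.
have : 0 <= A i j * w j 0.
  by apply: le_trans sum_ge0 _; rewrite (bigD1 j) //= gerDl sumr_le0.
have xj_lt0 : x j 0 < 0 by move: jPQ; rewrite PQ_S inE -ltNge.
move: jPQ; rewrite inE negb_or wE => /andP[/negbTE -> /negbTE ->].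
rewrite nmulr_lge0 ?pmulr_rlt0 // => Aij_le0.
by apply/eqP; rewrite eq_le Aij_le0 nnA.
Qed.

End Balanced.

Hypothesis irrA : irreducible_mx A.

Let balanced_split_contra (P Q : {set 'I_n}) (beta gam : R) :
  [disjoint P & Q] -> P :|: Q = S ->
  (forall i j, i \in P -> j \in Q -> A i j = 0) ->
  (forall i j, i \in Q -> j \in P -> A i j = 0) ->
  P != set0 -> Q != set0 -> 0 < beta -> 0 <= gam ->
  beta * (v^T *m restrict_cv x P) 0 0 = gam * (v^T *m restrict_cv x Q) 0 0 -> False.
Proof.
move=> disPQ PQ_S noedgePQ noedgeQP P0 /set0Pn[q qQ] beta_gt0 gam_ge0 bal.
have PT : P != setT.
  by apply/eqP => PT; move: (disjointFl disPQ qQ); rewrite PT in_setT.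
have [i [j [iP jP /negP Aij_neq0]]] := irrA P0 PT; apply/Aij_neq0/eqP.
have [jQ | jQ] := boolP (j \in Q); first exact: noedgePQ.
apply: (balanced_split_closed disPQ PQ_S noedgePQ beta_gt0 gam_ge0 bal iP).
by rewrite inE negb_or jP.
Qed.

Lemma nonneg_set_no_split (P Q : {set 'I_n}) :
  [disjoint P & Q] -> P :|: Q = S ->
  (forall i j, i \in P -> j \in Q -> A i j = 0) -> P != set0 -> Q != set0 -> False.
Proof.
move=> disPQ PQ_S noedgePQ P0 Q0.
have noedgeQP i j : i \in Q -> j \in P -> A i j = 0.
  by move=> iQ jP; rewrite -symA mxE noedgePQ.
have vdot_restrict_ge0 (T : {set 'I_n}) :
    T \subset S -> 0 <= (v^T *m restrict_cv x T) 0 0.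
  by move=> TS; apply/vdot_ge0/restrict_nonneg_ge0.
have [b0 | b_neq0] := eqVneq ((v^T *m restrict_cv x Q) 0 0) 0.
  apply: (@balanced_split_contra Q P 1 0) => //.
  - by rewrite disjoint_sym.
  - by rewrite setUC.
  - by rewrite b0 mul0r mulr0.
apply: (@balanced_split_contra P Q ((v^T *m restrict_cv x Q) 0 0)
  ((v^T *m restrict_cv x P) 0 0)) => //.
- by rewrite lt_def b_neq0 vdot_restrict_ge0 // -PQ_S subsetUr.
- by rewrite vdot_restrict_ge0 // -PQ_S subsetUl.
- by rewrite mulrC.
Qed.

End NonnegSplit.

Theorem lemma3p3 (R : rcfType) (n : nat) (A : 'M[R]_n) (d : 'rV[R]_n)
  (sigma : R) (v : 'cV[R]_n) (m : R) (x : 'cV[R]_n) :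
  sym_mx A -> nonneg_mx A -> irreducible_mx A ->
  nonneg_cv v -> v != 0 -> 0 < sigma ->
  is_lambda1 (gen_modularity A d sigma v) m ->
  x != 0 -> gen_modularity A d sigma v *m x = m *: x ->
  0 <= (v^T *m x) 0 0 ->
  induced_connected A [set i | 0 <= x i 0].
Proof.
move=> symA nnA irrA nnv _ sigma_gt0 [_ Mle] _ Mx vx_ge0 i0 j0.
rewrite !inE => i0S j0S.
set S := [set i | 0 <= x i 0]; set e := (X in connect X _ _).
apply/negPn/negP => no_path; pose S1 := [set k in S | connect e i0 k].
have psdN := sym_lambda1_psd (gen_modularity_sym d sigma v symA) Mle.
apply: (nonneg_set_no_split symA nnA nnv sigma_gt0 psdN Mx vx_ge0 irrA
  (P := S1) (Q := S :\: S1)).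
- by rewrite -setI_eq0 setDE setICA setICr setI0.
- have S1S : S1 \subset S by apply/subsetP => k; rewrite inE => /andP[].
  by rewrite -{1}(setIidPr S1S) setID.
- move=> i j; rewrite !inE => /andP[iS path_i] /andP[no_path_j jS].
  apply/eqP; rewrite eq_le nnA andbT leNgt; apply: contraNN no_path_j => Aij_gt0.
  rewrite jS; have [<- // | ij] := eqVneq i j.
  apply: connect_trans path_i (connect1 _).
  by rewrite /e /adjA ij Aij_gt0 !inE iS jS.
- by apply/set0Pn; exists i0; rewrite !inE i0S connect0.
- by apply/set0Pn; exists j0; rewrite !inE j0S no_path.
Qed.
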